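(* For every integer $d\ge1$, $\operatorname{non}(\mathrm{HDZ})=\operatorname{non}(\mathrm{HDZ}_{\mathbb{R}^d})$ and $\operatorname{cov}(\mathrm{HDZ})=\operatorname{cov}(\mathrm{HDZ}_{\mathbb{R}^d})$.
   Context: $2^\omega$ carries the metric $d(x,y)=2^{-\min\{n:x(n)\neq y(n)\}}$ for $x\neq y$ and $d(x,x)=0$; $\mathbb{R}^d$ carries the Euclidean metric. For a metric space $X$, $A\subseteq X$, $s>0$: $\mathcal{H}^s(A)=\lim_{\delta\to0}\inf\{\sum_n(\operatorname{diam}C_n)^s:A\subseteq\bigcup_nC_n,\ \operatorname{diam}C_n\le\delta\}$, and the Hausdorff dimension is $\dim_H(A)=\inf\{s>0:\mathcal{H}^s(A)=0\}$. $\mathrm{HDZ}_X=\{A\subseteq X:\dim_H(A)=0\}$ and $\mathrm{HDZ}=\mathrm{HDZ}_{2^\omega}$. For an ideal $I$ on $X$, $\operatorname{cov}(I)$ is the least size of a subfamily of $I$ covering $X$ and $\operatorname{non}(I)$ is the least size of a subset of $X$ not in $I$. *)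

From HB Require Import structures.
From mathcomp Require Import all_boot all_order all_algebra.
From mathcomp Require Import all_classical all_reals all_analysis.
Set Implicit Arguments. Unset Strict Implicit. Unset Printing Implicit Defensive.
Import Order.TTheory GRing.Theory Num.Theory.
Local Open Scope classical_set_scope.
Local Open Scope ring_scope.

Section Hausdorff.
Variables (R : realType) (T : Type) (dist : T -> T -> R).

(* diameter; convention diam set0 = 0 *)
Definition diam (C : set T) : \bar R :=
  ereal_sup ([set 0%E] `|` [set (dist p.1 p.2)%:E | p in C `*` C]).

Definition hausdorff_delta (s delta : R) (A : set T) : \bar R :=
  ereal_inf [set (\sum_(0 <= n <oo) ((fine (diam (C n))) `^ s)%:E)%E
            | C in [set C : nat -> set T |
                    A `<=` \bigcup_n C n /\ forall n, (diam (C n) <= delta%:E)%E]].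

(* H^s(A) = lim_{delta -> 0+} H^s_delta(A); since H^s_delta(A) is
   nonincreasing in delta, this limit is the supremum over delta > 0 *)
Definition hausdorff_measure (s : R) (A : set T) : \bar R :=
  ereal_sup [set hausdorff_delta s delta A | delta in [set delta : R | 0 < delta]].

Definition hausdorff_dim (A : set T) : \bar R :=
  ereal_inf [set s%:E | s in [set s : R | 0 < s /\ hausdorff_measure s A = 0%E]].

Definition HDZ_of : set (set T) := [set A | hausdorff_dim A = 0%E].
End Hausdorff.

Definition cantor_dist (R : realType) (x y : nat -> bool) : R :=
  if pselect (x = y) then 0
  else (2%:R^-1) ^+ (xget 0%N [set n | x n != y n /\ forall k, (k < n)%N -> x k = y k]).

Definition euclid_dist (R : realType) (d : nat) (x y : 'rV[R]_d) : R :=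
  Num.sqrt (\sum_(i < d) (x ord0 i - y ord0 i) ^+ 2).

Definition HDZ (R : realType) : set (set (nat -> bool)) := HDZ_of (@cantor_dist R).
Definition HDZ_Rd (R : realType) (d : nat) : set (set 'rV[R]_d) :=
  HDZ_of (@euclid_dist R d).

(* Cardinal invariants, compared relationally (no type of cardinals is
   available): non(I) <= non(J) iff every set outside J is at least as
   large as some set outside I (cardinals being well-ordered). *)
Definition non_le T U (I : set (set T)) (J : set (set U)) : Prop :=
  forall B : set U, ~ J B -> exists A : set T, ~ I A /\ (A #<= B)%card.
Definition non_eq T U (I : set (set T)) (J : set (set U)) : Prop :=
  non_le I J /\ non_le J I.

Definition cov_le T U (I : set (set T)) (J : set (set U)) : Prop :=
  forall F : set (set U), F `<=` J -> \bigcup_(B in F) B = [set: U] ->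
    exists G : set (set T), [/\ G `<=` I, \bigcup_(A in G) A = [set: T]
                             & (G #<= F)%card].
Definition cov_eq T U (I : set (set T)) (J : set (set U)) : Prop :=
  cov_le I J /\ cov_le J I.
Arguments HDZ R : clear implicits.
Arguments HDZ_Rd R d : clear implicits.

(* A map g with d2 x y <= (K d1 (g x) (g y))^gam on a set D pulls covers back, so it
   reflects Hausdorff dimension zero: S in D is dimension-zero as soon as g(S) is.
   Since dimension-zero sets form a sigma-ideal, countably many such maps on a
   countable cover transfer both non and cov. Into R^n we use the base-4 expansion
   e(x) = sum x_k 4^-(k+1) on the first axis: if x, y first differ at p then
   |e x - e y| >= 4^-p / 6, i.e. d(x, y) <= (6 |e x - e y|)^(1/2). Out of R^n we use,
   on each box [-M, M)^n, the sequence interleaving the binary digits of the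
   coordinates: agreement on the first P bits forces |s - t|^n <= K_M 2^-P. *)

From mathcomp Require Import all_boot all_order all_algebra.
From mathcomp Require Import all_classical all_reals all_analysis.
From mathcomp Require Import lra zify.
Set Implicit Arguments. Unset Strict Implicit. Unset Printing Implicit Defensive.
Import Order.TTheory GRing.Theory Num.Theory.
Local Open Scope classical_set_scope.
Local Open Scope ring_scope.

Lemma ge0_ger_powR (R : realType) (c s t : R) : 0 <= c <= 1 -> 0 < s -> s <= t ->
  c `^ t <= c `^ s.
Proof.
move=> /andP[c0 c1] s0 st; have [->|cn0] := eqVneq c 0.
  by rewrite !powR0 // gt_eqF // (lt_le_trans s0 st).
by apply: ger_powR => //; rewrite c1 andbT lt_def cn0 c0.
Qed.

Section Hausdorff.
Variables (R : realType) (T : Type) (dist : T -> T -> R).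
Local Open Scope ereal_scope.

Lemma diam_ge0 (C : set T) : 0 <= diam dist C.
Proof. by apply: ereal_sup_ubound; left. Qed.

Lemma diam_le (C : set T) (r : R) : (0 <= r)%R ->
  (forall x y, C x -> C y -> (dist x y <= r)%R) -> diam dist C <= r%:E.
Proof.
move=> r0 Cr; apply: ge_ereal_sup => z [->|[[x y] [/= Cx Cy] <-]] //.
by rewrite lee_fin Cr.
Qed.

Lemma dist_le_diam (C : set T) x y : C x -> C y -> (dist x y)%:E <= diam dist C.
Proof. by move=> Cx Cy; apply: ereal_sup_ubound; right; exists (x, y). Qed.

Lemma diam_fin_num (C : set T) (r : R) :
  diam dist C <= r%:E -> diam dist C \is a fin_num.
Proof.
by move=> Cr; rewrite ge0_fin_numE ?diam_ge0 // (le_lt_trans Cr) ?ltry.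
Qed.

Lemma fine_diam_itv (C : set T) (r : R) : diam dist C <= r%:E ->
  (0 <= fine (diam dist C) <= r)%R.
Proof.
by move: (diam_ge0 C); case: (diam dist C) => //= x; rewrite !lee_fin => -> ->.
Qed.

Lemma hausdorff_delta_ge0 s delta A : 0 <= hausdorff_delta dist s delta A.
Proof.
apply: le_ereal_inf_tmp => _ [C _ <-]; apply: nneseries_ge0 => n _ _.
by rewrite lee_fin powR_ge0.
Qed.

Lemma hausdorff_measure_eq0P s A : hausdorff_measure dist s A = 0 <->
  forall delta, (0 < delta)%R -> hausdorff_delta dist s delta A = 0.
Proof.
split=> [A0 delta delta0|A0].
  apply/eqP; rewrite eq_le hausdorff_delta_ge0 andbT -A0.
  by apply: ereal_sup_ubound; exists delta.
apply/eqP; rewrite eq_le; apply/andP; split.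
  by apply: ge_ereal_sup => _ [delta delta0 <-]; rewrite A0.
by apply: le_ereal_sup_tmp; exists 0 => //; exists 1%R; [exact: ltr01 | exact: A0].
Qed.

Lemma hausdorff_delta_eq0P s delta A : hausdorff_delta dist s delta A = 0 <->
  forall eps, (0 < eps)%R -> exists C : nat -> set T,
   [/\ A `<=` \bigcup_n C n, (forall n, diam dist (C n) <= delta%:E) &
       \sum_(0 <= n <oo) ((fine (diam dist (C n))) `^ s)%:E < eps%:E].
Proof.
split=> [A0 eps eps0|Aeps].
  have : hausdorff_delta dist s delta A < eps%:E by rewrite A0 lte_fin.
  by move=> /ereal_inf_lt [_ [C [AC Cdelta] <-] Ceps]; exists C.
apply/eqP; rewrite eq_le hausdorff_delta_ge0 andbT.
apply/lee_addgt0Pr => eps eps0; rewrite add0e.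
have [C [AC Cdelta Ceps]] := Aeps eps eps0.
by apply: ge_ereal_inf; eexists; [exists C | exact: ltW Ceps].
Qed.

Lemma hausdorff_measure_eq0_le (A : set T) (s t : R) :
  (0 < s)%R -> (s <= t)%R -> hausdorff_measure dist s A = 0 ->
  hausdorff_measure dist t A = 0.
Proof.
move=> s0 st /hausdorff_measure_eq0P As.
apply/hausdorff_measure_eq0P => delta delta0; apply/hausdorff_delta_eq0P => eps eps0.
have delta1 : (0 < Num.min delta 1)%R by rewrite lt_min delta0 ltr01.
have /hausdorff_delta_eq0P /(_ eps eps0) [C [AC Cdelta Ceps]] := As _ delta1.
have Cdelta1 n : (0 <= fine (diam dist (C n)) <= Num.min delta 1)%R.
  exact: fine_diam_itv.
exists C; split => // [n|].
  by apply: (le_trans (Cdelta n)); rewrite lee_fin ge_min lexx.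
apply: le_lt_trans Ceps; apply: lee_nneseries => n _; first by rewrite lee_fin powR_ge0.
rewrite lee_fin; apply: ge0_ger_powR => //.
have /andP[Cn0 Cn1] := Cdelta1 n.
by rewrite Cn0 (le_trans Cn1) // ge_min lexx orbT.
Qed.

Lemma HDZ_ofP (A : set T) :
  HDZ_of dist A <-> forall s, (0 < s)%R -> hausdorff_measure dist s A = 0.
Proof.
rewrite /HDZ_of /hausdorff_dim; split=> [A0 s s0|As].
  have : ereal_inf [set s%:E | s in [set s | (0 < s)%R /\
    hausdorff_measure dist s A = 0]] < s%:E by rewrite A0 lte_fin.
  move=> /ereal_inf_lt [_ [t [t0 At] <-]]; rewrite lte_fin => ts.
  exact: hausdorff_measure_eq0_le t0 (ltW ts) At.
apply/eqP; rewrite eq_le; apply/andP; split.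
  apply/lee_addgt0Pr => e e0; rewrite add0e.
  by apply: ereal_inf_lbound; exists e => //; split => //; exact: As.
by apply: le_ereal_inf_tmp => _ [t [t0 _] <-]; rewrite lee_fin ltW.
Qed.

End Hausdorff.

Section CoHolder.
Variables (R : realType) (T1 T2 : Type) (d1 : T1 -> T1 -> R) (d2 : T2 -> T2 -> R).
Variables (D : set T2) (g : T2 -> T1) (K gam : R).
Hypotheses (d1_ge0 : forall x y, 0 <= d1 x y) (K0 : 0 < K) (gam0 : 0 < gam).
Hypothesis gD : forall x y, D x -> D y -> d2 x y <= (K * d1 (g x) (g y)) `^ gam.

Lemma diam_preimage_le (S : set T2) (C : set T1) (r : R) : S `<=` D ->
  (diam d1 C <= r%:E)%E ->
  (diam d2 (S `&` g @^-1` C) <= ((K * fine (diam d1 C)) `^ gam)%:E)%E.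
Proof.
move=> SD Cr; have /andP[C0 _] := fine_diam_itv Cr.
apply: diam_le; first exact: powR_ge0.
move=> x y [/SD Dx Cx] [/SD Dy Cy]; apply: (le_trans (gD Dx Dy)).
have K_ge0 := ltW K0.
apply: ge0_ler_powR; rewrite ?nnegrE ?mulr_ge0 ?(ltW gam0) //.
rewrite ler_pM2l // -lee_fin fineK; first exact: dist_le_diam.
exact: diam_fin_num Cr.
Qed.

(* Pulling a delta-cover of A back along g turns diameters r into at most (K r)^gam,
   so the s-sums of the pulled-back cover are K^(gam s) times (gam s)-sums of the cover. *)
Lemma HDZ_of_coholder (A : set T1) (S : set T2) :
  S `<=` D `&` g @^-1` A -> HDZ_of d1 A -> HDZ_of d2 S.
Proof.
move=> SA /HDZ_ofP A0; apply/HDZ_ofP => s s0.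
apply/hausdorff_measure_eq0P => delta delta0; apply/hausdorff_delta_eq0P => eps eps0.
have SD : S `<=` D by move=> x /SA[].
have gams0 : 0 < gam * s by rewrite mulr_gt0.
pose delta1 := delta `^ gam^-1 / K.
have delta10 : 0 < delta1 by rewrite divr_gt0 // powR_gt0.
have Kdelta1 : (K * delta1) `^ gam = delta.
  by rewrite mulrC divfK ?gt_eqF // -powRrM mulVf ?gt_eqF // powRr1 // ltW.
pose eps1 := eps / K `^ (gam * s).
have eps10 : 0 < eps1 by rewrite divr_gt0 // powR_gt0.
have /hausdorff_measure_eq0P /(_ _ delta10) /hausdorff_delta_eq0P /(_ _ eps10)
  [C [AC Cdelta Ceps]] := A0 _ gams0.
have Cdelta1 n : 0 <= fine (diam d1 (C n)) <= delta1 by exact: fine_diam_itv.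
pose E n := S `&` g @^-1` C n.
have Ediam n := diam_preimage_le SD (Cdelta n).
exists E; split.
- by move=> x Sx; have [n _ Cn] := AC _ (SA _ Sx).2; exists n.
- move=> n; apply: (le_trans (Ediam n)); rewrite lee_fin -Kdelta1.
  have /andP[Cn0 Cn_le] := Cdelta1 n.
  apply: ge0_ler_powR; rewrite ?nnegrE ?ler_pM2l //; first exact: ltW.
  - by apply: mulr_ge0 => //; exact: ltW.
  - by apply: mulr_ge0; exact: ltW.
apply: (@le_lt_trans _ _ (\sum_(0 <= n <oo)
   ((K `^ (gam * s))%:E * ((fine (diam d1 (C n))) `^ (gam * s))%:E))%E).
  apply: lee_nneseries => n _; first by rewrite lee_fin powR_ge0.
  have /fine_diam_itv /andP[En0 En] := Ediam n.
  have /andP[Cn0 _] := Cdelta1 n.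
  rewrite -EFinM lee_fin; apply: (le_trans (ge0_ler_powR (ltW s0) _ _ En)).
  - by rewrite nnegrE.
  - by rewrite nnegrE powR_ge0.
  by rewrite -powRrM powRM //; exact: ltW.
rewrite nneseriesZl; last by move=> n _; rewrite lee_fin powR_ge0.
have -> : eps = K `^ (gam * s) * eps1 by rewrite mulrC divfK // gt_eqF ?powR_gt0.
by rewrite EFinM lte_pmul2l ?lte_fin ?powR_gt0.
Qed.

End CoHolder.

(* All sets are measurable in [g_sigma_algebraType setT], so [hausdorff_delta] is the
   outer measure [mu_ext] induced by C |-> diam C ^ s (or +oo when diam C > delta).
   The carrier is pointed only because [g_sigma_algebraType] requires it. *)
Lemma hausdorff_delta_sigma_subadditive (R : realType) (T : pointedType)
    (dist : T -> T -> R) (s delta : R) :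
  sigma_subadditive (hausdorff_delta dist s delta).
Proof.
pose mu (C : set (g_sigma_algebraType (@setT (set T)))) : \bar R :=
  if (diam dist C <= delta%:E)%E then ((fine (diam dist C)) `^ s)%:E else +oo%E.
have mu_ge0 C : (0 <= mu C)%E.
  by rewrite /mu; case: ifP; rewrite ?lee_fin ?powR_ge0 ?leey.
suff -> : hausdorff_delta dist s delta = mu_ext mu.
  by move=> F; apply: (mu_ext_sigma_subadditive mu_ge0 F).
apply/funext => X; apply/eqP; rewrite eq_le; apply/andP; split.
  apply: le_ereal_inf_tmp => _ [F [_ XF] <-].
  have [Fdelta|/existsNP [k Fk]] := pselect (forall k, diam dist (F k) <= delta%:E)%E.
    apply: ereal_inf_lbound; exists F => //.
    by apply: eq_eseriesr => n _; rewrite /mu Fdelta.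
  rewrite (@eseries_pinfty _ _ _ k) ?leey //; last by rewrite /mu ifF //; exact/negbTE/negP.
  by move=> n _; rewrite gt_eqF // (lt_le_trans _ (mu_ge0 _)) // ltNyr.
apply: ereal_inf_le_tmp => _ [C [XC Cdelta] <-].
exists C; first by split => // n; exact: sub_sigma_algebra.
by apply: eq_eseriesr => n _; rewrite /mu Cdelta.
Qed.

Lemma HDZ_of_bigcup (R : realType) (T : Type) (dist : T -> T -> R) (A : nat -> set T) :
  (forall m, HDZ_of dist (A m)) -> HDZ_of dist (\bigcup_m A m).
Proof.
elim/Ppointed: T dist A => T dist A A0.
  by rewrite (empty_eq0 (\bigcup_m A m)) -(empty_eq0 (A 0%N)).
apply/HDZ_ofP => s s0; apply/hausdorff_measure_eq0P => delta delta0.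
apply/eqP; rewrite eq_le hausdorff_delta_ge0 andbT.
apply: (le_trans (hausdorff_delta_sigma_subadditive _ _ _ _)).
rewrite eseries0 // => m _ _.
by have /HDZ_ofP /(_ _ s0) /hausdorff_measure_eq0P -> := A0 m.
Qed.

Section LocallyReflectedIdeal.
Variables (T U : Type) (I : set (set T)) (J : set (set U)).
Variables (D : nat -> set U) (f : nat -> U -> T).
Hypothesis J_bigcup : forall B : nat -> set U, (forall m, J (B m)) -> J (\bigcup_m B m).
Hypothesis D_cover : \bigcup_m D m = setT.
Hypothesis f_reflect : forall m (A : set T) (S : set U),
  S `<=` D m `&` f m @^-1` A -> I A -> J S.

Lemma non_le_of_reflect : non_le I J.
Proof.
move=> B JB.
have [m JBm] : exists m, ~ J (B `&` D m).
  apply: contra_notP JB => /forallNP JBD.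
  rewrite -[B]setIT -D_cover setI_bigcupr; apply: J_bigcup => m.
  exact: contrapT (JBD m).
exists (f m @` (B `&` D m)); split; last first.
  exact: card_le_trans (card_image_le _ _) (subset_card_le (@subIsetl _ _ _)).
move=> IA; apply: JBm; apply: (f_reflect (m := m) _ IA).
by move=> x [Bx Dx]; split => //; exists x.
Qed.

Lemma cov_le_of_reflect : cov_le J I.
Proof.
move=> F FI FT.
exists ((fun A => \bigcup_m (D m `&` f m @^-1` A)) @` F); split.
- by move=> _ [A FA <-]; apply: J_bigcup => m; exact: (f_reflect (m := m) (@subset_refl _ _) (FI _ FA)).
- apply/seteqP; split => // x _.
  have [m _ Dx] : (\bigcup_m D m) x by rewrite D_cover.
  have [A FA Afx] : (\bigcup_(A in F) A) (f m x) by rewrite FT.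
  by exists (\bigcup_m (D m `&` f m @^-1` A)); [exists A | exists m].
- exact: card_image_le.
Qed.

End LocallyReflectedIdeal.

Section CantorDistance.
Variable R : realType.

Lemma cantor_dist_ge0 (x y : nat -> bool) : 0 <= cantor_dist R x y.
Proof. by rewrite /cantor_dist; destruct (pselect (x = y)). Qed.

Lemma cantor_distxx (x : nat -> bool) : cantor_dist R x x = 0.
Proof. by rewrite /cantor_dist; destruct (pselect (x = x)). Qed.

Lemma cantor_dist_first_diff (x y : nat -> bool) : x <> y -> exists p,
  [/\ x p <> y p, (forall k, (k < p)%N -> x k = y k) &
      cantor_dist R x y = 2^-1 ^+ p].
Proof.
move=> xy; have xy_ex : exists n, x n != y n.
  apply: contra_notP xy => /forallNP xy_eq; apply/funext => n.
  exact/eqP/negbNE/negP/xy_eq.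
have [p /eqP xyp p_min] := ex_minnP xy_ex.
have xy_agree k : (k < p)%N -> x k = y k.
  by move=> kp; apply/eqP/negbNE/negP => /p_min; rewrite leqNgt kp.
exists p; split => //; rewrite /cantor_dist; destruct (pselect (x = y)) as [xy_eq|xy_neq]; first by [].

congr (_ ^+ _); apply: xget_unique; first by split => //; exact/eqP.
move=> n [/eqP xyn n_agree]; apply/eqP; rewrite eqn_leq p_min ?andbT; last exact/eqP.
by rewrite leqNgt; apply/negP => np; exact: xyp (n_agree _ np).
Qed.

End CantorDistance.

Lemma euclid_dist_ge0 (R : realType) n (x y : 'rV[R]_n) : 0 <= euclid_dist x y.
Proof. exact: sqrtr_ge0. Qed.

Section Base4Expansion.
Variable R : realType.
Local Notation q := (4%:R^-1 : R).

Definition base4_partial (x : nat -> bool) (N : nat) : R :=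
  \sum_(0 <= k < N) (x k)%:R * q ^+ k.+1.

Lemma base4_partial_grow x M j :
  base4_partial x M <= base4_partial x (M + j) <=
  base4_partial x M + (q ^+ M - q ^+ (M + j)) / 3%:R.
Proof.
elim: j => [|j]; first by rewrite addn0 subrr mul0r addr0 lexx.
rewrite addnS /base4_partial big_nat_recr ?leq0n //= -/(base4_partial x M).
rewrite -/(base4_partial x (M + j)) exprSr.
have q_ge0 : 0 <= q ^+ (M + j) by rewrite exprn_ge0 ?invr_ge0.
have : 0 <= (x (M + j))%:R * (q ^+ (M + j) * q) <= q ^+ (M + j) / 4%:R.
  by case: (x _); rewrite ?mul0r ?mul1r lexx ?mulr_ge0 ?invr_ge0.
lra.
Qed.

Lemma base4_partial_le x N M : base4_partial x N <= base4_partial x M + q ^+ M / 3%:R.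
Proof.
have qM_ge0 : 0 <= q ^+ M by rewrite exprn_ge0 ?invr_ge0.
have [NM|MN] := leqP N M.
  have /andP[+ _] := base4_partial_grow x N (M - N); rewrite subnKC //; lra.
have /andP[_] := base4_partial_grow x M (N - M); rewrite subnKC 1?ltnW //.
have : 0 <= q ^+ N by rewrite exprn_ge0 ?invr_ge0.
lra.
Qed.

Definition base4 (x : nat -> bool) : R := sup (range (base4_partial x)).

Lemma base4_partial_le_base4 x N : base4_partial x N <= base4 x.
Proof.
apply: ub_le_sup; last by exists N.
exists (base4_partial x 0 + q ^+ 0 / 3%:R) => _ [n _ <-].
exact: base4_partial_le.
Qed.

Lemma base4_le x M : base4 x <= base4_partial x M + q ^+ M / 3%:R.
Proof.
apply: ge_sup; first by exists (base4_partial x 0), 0%N.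
by move=> _ [N _ <-]; exact: base4_partial_le.
Qed.

(* After the common prefix, x gains q^(p+1) while y gains at most q^(p+1)/3. *)
Lemma base4_gap (x y : nat -> bool) p : x p -> ~~ y p ->
  (forall k, (k < p)%N -> x k = y k) -> q ^+ p / 6%:R <= base4 x - base4 y.
Proof.
move=> xp /negbTE yp xy_agree.
have xy_prefix : base4_partial x p = base4_partial y p.
  by apply: eq_big_nat => k /andP[_ kp]; rewrite xy_agree.
have Sx : base4_partial x p.+1 = base4_partial x p + q ^+ p * q.
  by rewrite /base4_partial big_nat_recr //= xp mul1r exprSr.
have Sy : base4_partial y p.+1 = base4_partial y p.
  by rewrite /base4_partial big_nat_recr //= yp mul0r addr0.
have := base4_partial_le_base4 x p.+1; have := base4_le y p.+1.
rewrite Sx Sy xy_prefix exprSr.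
have : 0 <= q ^+ p by rewrite exprn_ge0 ?invr_ge0.
lra.
Qed.

Lemma cantor_dist_le_base4 (x y : nat -> bool) :
  cantor_dist R x y <= (6%:R * `|base4 x - base4 y|) `^ 2^-1.
Proof.
have [<-|xy] := pselect (x = y); first by rewrite cantor_distxx powR_ge0.
have [p [xyp xy_agree ->]] := cantor_dist_first_diff R xy.
have gap : q ^+ p / 6%:R <= `|base4 x - base4 y|.
  case xp : (x p); case yp : (y p); rewrite ?xp ?yp in xyp => //.
    by apply: le_trans (ler_norm _); apply: base4_gap; rewrite ?xp ?yp.
  rewrite distrC; apply: le_trans (ler_norm _); apply: base4_gap; rewrite ?xp ?yp //.
  by move=> k kp; rewrite xy_agree.
have half_ge0 : 0 <= 2^-1 ^+ p :> R by rewrite exprn_ge0 ?invr_ge0.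
rewrite powR12_sqrt ?mulr_ge0 // -(ger0_norm half_ge0) -sqrtr_sqr ler_sqrt ?mulr_ge0 //.
rewrite -exprM mulnC exprM.
have -> : (2^-1 : R) ^+ 2 = q by rewrite exprVn -natrX.
by rewrite -ler_pdivrMl ?ltr0n // mulrC.
Qed.

Definition base4_row n (x : nat -> bool) : 'rV[R]_n.+1 :=
  \row_i (if i == ord0 then base4 x else 0).

Lemma base4_row_coholder n (x y : nat -> bool) :
  cantor_dist R x y <= (6%:R * euclid_dist (base4_row n x) (base4_row n y)) `^ 2^-1.
Proof.
rewrite /euclid_dist big_ord_recl !mxE /= big1 ?addr0 ?sqrtr_sqr.
  exact: cantor_dist_le_base4.
by move=> i _; rewrite !mxE /= subrr expr0n.
Qed.

End Base4Expansion.

Section DyadicDigits.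
Variable R : realType.

Definition dyadic_floor (k : nat) (v : R) : int := Num.floor (v * 2%:R ^+ k).
Definition dyadic_digit (k : nat) (v : R) : bool :=
  dyadic_floor k.+1 v - 2 * dyadic_floor k v == 1.

Lemma dyadic_floorS k v : dyadic_floor k.+1 v = 2 * dyadic_floor k v \/
  dyadic_floor k.+1 v = 2 * dyadic_floor k v + 1.
Proof.
rewrite /dyadic_floor exprSr mulrA; set y := v * 2%:R ^+ k.
have /andP[fl_le lt_fl] := floor_itv y.
have lo : 2 * Num.floor y <= Num.floor (y * 2%:R).
  by rewrite floor_ge_int rmorphM /= mulrC ler_pM2r.
have hi : Num.floor (y * 2%:R) < 2 * Num.floor y + 2.
  rewrite floor_lt_int rmorphD rmorphM /=.
  move: lt_fl; rewrite rmorphD /= => lt_fl.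
  have -> : (2 : int)%:~R = 2%:R :> R by [].
  lra.
lia.
Qed.

Lemma eq_dyadic_floor v w K : dyadic_floor 0 v = dyadic_floor 0 w ->
  (forall k, (k < K)%N -> dyadic_digit k v = dyadic_digit k w) ->
  dyadic_floor K v = dyadic_floor K w.
Proof.
move=> vw0; elim: K => [//|K IH] vw_digit.
have vwK := IH (fun k kK => vw_digit k (ltnW kK)).
have := vw_digit K (ltnSn K); rewrite /dyadic_digit vwK.
by case: (dyadic_floorS K v) => ->; case: (dyadic_floorS K w) => ->; rewrite vwK; lia.
Qed.

Lemma dyadic_floor_eq_dist v w K : dyadic_floor K v = dyadic_floor K w ->
  `|v - w| < 2^-1 ^+ K.
Proof.
rewrite /dyadic_floor => vwK.
have /andP[v_lo v_hi] := floor_itv (v * 2%:R ^+ K).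
have /andP[w_lo w_hi] := floor_itv (w * 2%:R ^+ K).
have pow2_gt0 : 0 < (2%:R : R) ^+ K by rewrite exprn_gt0.
have : `|v * 2%:R ^+ K - w * 2%:R ^+ K| < 1.
  by move: v_lo v_hi w_lo w_hi; rewrite vwK rmorphD /= ltr_norml; lra.
by rewrite -mulrBl normrM (gtr0_norm pow2_gt0) -ltr_pdivlMr // mul1r exprVn.
Qed.

End DyadicDigits.

Lemma le0_of_le_halfpow (R : realType) (a C : R) :
  (forall P, a <= C * 2^-1 ^+ P) -> a <= 0.
Proof.
move=> aC; rewrite leNgt; apply/negP => a0.
pose P := Num.truncn (C / a).
have CaP : C / a < P.+1%:R by exact: truncnS_gt.
have P2P : (P.+1%:R : R) <= 2%:R ^+ P by rewrite -natrX ler_nat ltn_expl.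
have := aC P; rewrite exprVn ler_pdivlMr ?exprn_gt0 //.
move: CaP; rewrite ltr_pdivrMr // => CaP.
have : a * P.+1%:R <= a * 2%:R ^+ P by rewrite ler_pM2l.
lra.
Qed.

Lemma le_powR_inv (R : realType) (a b : R) (N : nat) : 0 <= a -> 0 <= b ->
  a ^+ N.+1 <= b -> a <= b `^ N.+1%:R^-1.
Proof.
move=> a0 b0 ab.
have {1}-> : a = (a ^+ N.+1) `^ N.+1%:R^-1.
  by rewrite -powR_mulrn // -powRrM mulfV ?pnatr_eq0 // powRr1.
by apply: ge0_ler_powR; rewrite ?nnegrE ?invr_ge0 ?exprn_ge0.
Qed.

Lemma halfpow_le_shift (R : realType) (i j k : nat) : (j <= i + k)%N ->
  (2^-1 : R) ^+ i <= 2 ^+ k * 2^-1 ^+ j.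
Proof.
move=> jik; have -> : (2^-1 : R) ^+ i = 2 ^+ k * 2^-1 ^+ (i + k).
  by rewrite exprD mulrCA -exprMn mulfV ?pnatr_eq0 // expr1n mulr1.
rewrite ler_pM2l ?exprn_gt0 //; apply: ler_wiXn2l => //.
by rewrite invf_le1 ?ler1n.
Qed.

Lemma euclid_dist_le_coord (R : realType) n (x y : 'rV[R]_n) (c : R) : 0 <= c ->
  (forall i, `|x ord0 i - y ord0 i| <= c) -> euclid_dist x y <= n%:R * c.
Proof.
move=> c0 xyc.
have sum_le : \sum_(i < n) (x ord0 i - y ord0 i) ^+ 2 <= (n%:R * c) ^+ 2.
  have coord_sq i : (x ord0 i - y ord0 i) ^+ 2 <= c ^+ 2.
    by rewrite -real_normK ?num_real // ler_pXn2r ?nnegrE.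
  apply: (le_trans (ler_sum _ (fun i _ => coord_sq i))).
  rewrite sumr_const card_ord exprMn -[_ *+ n]mulr_natl.
  apply: (ler_wpM2r (exprn_ge0 2 c0)).
  by rewrite expr2 -natrM ler_nat; nia.
have nc0 : 0 <= n%:R * c by rewrite mulr_ge0.
by rewrite /euclid_dist -(ger0_norm nc0) -sqrtr_sqr ler_sqrt ?exprn_ge0.
Qed.

Section DyadicBoxCode.
Variables (R : realType) (n : nat).

Definition box_radius (m : nat) : R := m.+1%:R.

Definition box (m : nat) : set 'rV[R]_n.+1 :=
  [set s | forall i, - box_radius m <= s ord0 i < box_radius m].

Definition box_unit m (s : 'rV[R]_n.+1) i : R :=
  (s ord0 i + box_radius m) / (2 * box_radius m).

Definition box_code m (s : 'rV[R]_n.+1) : nat -> bool :=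
  fun k => dyadic_digit (k %/ n.+1) (box_unit m s (inord (k %% n.+1))).

Definition box_code_const m : R := (2 * (n.+1%:R * (2 * box_radius m))) ^+ n.+1.

Lemma box_radius_gt0 m : 0 < box_radius m.
Proof. by rewrite ltr0n. Qed.

Lemma box_code_const_gt0 m : 0 < box_code_const m.
Proof. by rewrite exprn_gt0 // !mulr_gt0 ?ltr0n ?box_radius_gt0. Qed.

Lemma dyadic_floor0_box_unit m s i : box m s -> dyadic_floor 0 (box_unit m s i) = 0.
Proof.
move=> /(_ i) /andP[s_lo s_hi]; apply/eqP.
have r0 := box_radius_gt0 m; have r2 : 0 < 2 * box_radius m by rewrite mulr_gt0.
rewrite /dyadic_floor expr0 mulr1 floor_eq /= /box_unit.
by rewrite ler_pdivlMr // ltr_pdivrMr // mul0r add0r mul1r; apply/andP; split; lra.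
Qed.

Lemma box_code_agree_coord m s t P : box m s -> box m t ->
  (forall k, (k < P)%N -> box_code m s k = box_code m t k) ->
  forall i, `|s ord0 i - t ord0 i| <= 2 * box_radius m * 2^-1 ^+ (P %/ n.+1).
Proof.
move=> bs bt st_agree i; set K := (P %/ n.+1)%N.
have digit_agree k : (k < K)%N ->
    dyadic_digit k (box_unit m s i) = dyadic_digit k (box_unit m t i).
  move=> kK; have kiP : (k * n.+1 + i < P)%N.
    have : (k.+1 * n.+1 <= K * n.+1)%N by rewrite leq_mul2r kK orbT.
    have : (K * n.+1 <= P)%N by rewrite leq_divM.
    by have := ltn_ord i; rewrite mulSn; lia.
  have := st_agree _ kiP; rewrite /box_code.
  by rewrite divnMDl // divn_small // addn0 modnMDl modn_small // inord_val.
have floor_eq : dyadic_floor 0 (box_unit m s i) = dyadic_floor 0 (box_unit m t i).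
  by rewrite !dyadic_floor0_box_unit.
have := dyadic_floor_eq_dist (eq_dyadic_floor floor_eq digit_agree).
have r2 : 0 < 2 * box_radius m by rewrite mulr_gt0 ?box_radius_gt0.
rewrite /box_unit -mulrBl opprD addrACA subrr addr0 normrM.
by rewrite [`|_^-1|]gtr0_norm ?invr_gt0 // ltr_pdivrMr // mulrC => /ltW.
Qed.

Lemma box_code_agree_dist m s t P : box m s -> box m t ->
  (forall k, (k < P)%N -> box_code m s k = box_code m t k) ->
  euclid_dist s t ^+ n.+1 <= box_code_const m * 2^-1 ^+ P.
Proof.
move=> bs bt st_agree; set K := (P %/ n.+1)%N.
have r2 : 0 <= 2 * box_radius m by rewrite mulr_ge0 ?ltW ?box_radius_gt0.
have c0 : 0 <= 2 * box_radius m * 2^-1 ^+ K by rewrite mulr_ge0 ?exprn_ge0 ?invr_ge0.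
have st_le := euclid_dist_le_coord c0 (box_code_agree_coord bs bt st_agree).
apply: (le_trans (_ : _ <= (n.+1%:R * (2 * box_radius m * 2^-1 ^+ K)) ^+ n.+1)).
  by rewrite ler_pXn2r ?nnegrE ?euclid_dist_ge0 ?mulr_ge0.
have PK : (P <= K * n.+1 + n.+1)%N.
  by rewrite /K; have := ltn_pmod P (ltn0Sn n); have := divn_eq P n.+1; lia.
set A := (n.+1%:R * (2 * box_radius m)) ^+ n.+1.
have A0 : 0 <= A by rewrite exprn_ge0 // mulr_ge0.
have -> : (n.+1%:R * (2 * box_radius m * 2^-1 ^+ K)) ^+ n.+1 = A * 2^-1 ^+ (K * n.+1).
  by rewrite mulrA exprMn -exprM.
rewrite /box_code_const exprMn -/A [_ * A]mulrC -mulrA; apply: (ler_wpM2l A0).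
exact: halfpow_le_shift.
Qed.

Lemma box_code_coholder m s t : box m s -> box m t ->
  euclid_dist s t <=
    (box_code_const m * cantor_dist R (box_code m s) (box_code m t)) `^ n.+1%:R^-1.
Proof.
move=> bs bt; have const0 := box_code_const_gt0 m.
have [st_eq|st_neq] := pselect (box_code m s = box_code m t).
  rewrite st_eq cantor_distxx mulr0 powR0 ?invr_eq0 ?pnatr_eq0 //.
  have st_le0 : euclid_dist s t ^+ n.+1 <= 0.
    apply: (le0_of_le_halfpow (C := box_code_const m)) => P.
    by apply: box_code_agree_dist => // k _; rewrite st_eq.
  rewrite leNgt; apply/negP => /(exprn_gt0 n.+1).
  by rewrite ltNge st_le0.
have [p [_ st_agree ->]] := cantor_dist_first_diff R st_neq.
apply: le_powR_inv; first exact: euclid_dist_ge0.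
  by apply: mulr_ge0; [exact: ltW | rewrite exprn_ge0 ?invr_ge0].
exact: box_code_agree_dist.
Qed.

Lemma box_cover : \bigcup_m box m = setT.
Proof.
apply/seteqP; split => // s _; set S := \sum_i `|s ord0 i|.
exists (Num.truncn S) => // i.
have si_S : `|s ord0 i| <= S by rewrite /S (bigD1 i) //= lerDl sumr_ge0.
have S_lt := truncnS_gt S.
have := ler_norm (s ord0 i); have := ler_norm (- s ord0 i); rewrite normrN /box_radius.
by move=> si_le msi_le; apply/andP; split; lra.
Qed.

End DyadicBoxCode.

Theorem theorem2p11 (R : realType) (d : nat) (hd : (1 <= d)%N) :
  non_eq (HDZ R) (HDZ_Rd R d) /\ cov_eq (HDZ R) (HDZ_Rd R d).
Proof.
case: d hd => [//|n] _.
have code_reflect m (A : set (nat -> bool)) (S : set 'rV[R]_n.+1) :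
    S `<=` @box R n m `&` box_code m @^-1` A -> HDZ R A -> HDZ_Rd R n.+1 S.
  apply: (HDZ_of_coholder (@cantor_dist_ge0 R) (@box_code_const_gt0 R n m) _
    (@box_code_coholder R n m)).
  by rewrite invr_gt0 ltr0n.
have row_reflect (_ : nat) (A : set 'rV[R]_n.+1) (S : set (nat -> bool)) :
    S `<=` setT `&` @base4_row R n @^-1` A -> HDZ_Rd R n.+1 A -> HDZ R S.
  apply: (HDZ_of_coholder (@euclid_dist_ge0 R _) (_ : 0 < 6%:R) _
    (fun x y _ _ => base4_row_coholder R n x y)) => //.
have cover_const : \bigcup_(m : nat) [set: nat -> bool] = setT.
  by apply/seteqP; split => // x _; exists 0%N.
have bigcup_Rd := @HDZ_of_bigcup R _ (@euclid_dist R n.+1).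
have bigcup_C := @HDZ_of_bigcup R _ (@cantor_dist R).
split; split.
- exact: non_le_of_reflect bigcup_Rd (@box_cover R n) code_reflect.
- exact: non_le_of_reflect bigcup_C cover_const row_reflect.
- exact: cov_le_of_reflect bigcup_C cover_const row_reflect.
- exact: cov_le_of_reflect bigcup_Rd (@box_cover R n) code_reflect.
Qed.
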